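(* Let $D=(-1,1)$, $\nu=1/2$, and $\phi_j(t)=e^{\mathrm{i}j\pi t}$, $j\in\mathbb Z$. Let $T=\{t_n\}_{n=1}^N\subseteq[-1,1]$ be a set of $N$ points such that $t_nP\in\mathbb Z$ for some $P\in\mathbb N$ and all $n=1,\dots,N$. Let $U=\{\phi_j(t_n)\}_{n=1,\dots,N,\ j\in\mathbb Z}$ and $y\in\mathbb C^N$, and suppose $\hat x\in\ell^1(\mathbb Z)$ is a solution of $$\inf_{z\in\ell^1(\mathbb Z)}\|z\|_1\quad\text{subject to } Uz=y.$$ Then for every $k\in\mathbb Z$, the element $z\in\ell^1(\mathbb Z)$ given by $z_i=\hat x_{i-2kP}$, $i\in\mathbb Z$, is also a solution of this problem.
   Context: $U$ is viewed as the linear map $\ell^1(\mathbb Z)\to\mathbb C^N$, $(Uz)_n=\sum_{j\in\mathbb Z}z_j e^{\mathrm i j\pi t_n}$; $\|z\|_1=\sum_{j\in\mathbb Z}|z_j|$. *)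

From Stdlib Require Import Reals ZArith.
From Coquelicot Require Import Coquelicot.
Open Scope R_scope.

Definition phi (j : Z) (t : R) : C :=
  (cos (IZR j * PI * t), sin (IZR j * PI * t)).

(* The two one-sided halves of a Z-indexed family: j >= 0 and j <= -1. *)
Definition posZ {A} (a : Z -> A) (n : nat) : A := a (Z.of_nat n).
Definition negZ {A} (a : Z -> A) (n : nat) : A := a (- Z.of_nat (S n))%Z.

Definition ell1 (z : Z -> C) : Prop :=
  ex_series (posZ (fun j => Cmod (z j))) /\
  ex_series (negZ (fun j => Cmod (z j))).

Definition norm1 (z : Z -> C) : R :=
  Series (posZ (fun j => Cmod (z j))) + Series (negZ (fun j => Cmod (z j))).

(* sum over Z of a complex family (meaningful for absolutely summable families),
   computed componentwise on real and imaginary parts *)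
Definition sumZ (a : Z -> C) : C :=
  (Series (posZ (fun j => Re (a j))) + Series (negZ (fun j => Re (a j))),
   Series (posZ (fun j => Im (a j))) + Series (negZ (fun j => Im (a j)))).

Definition Uop (t : nat -> R) (z : Z -> C) (n : nat) : C :=
  sumZ (fun j => Cmult (z j) (phi j (t n))).

Definition feasible (N : nat) (t : nat -> R) (y : nat -> C) (z : Z -> C) : Prop :=
  ell1 z /\ forall n, (n < N)%nat -> Uop t z n = y n.

Definition is_solution (N : nat) (t : nat -> R) (y : nat -> C) (x : Z -> C) : Prop :=
  feasible N t y x /\ forall z, feasible N t y z -> norm1 x <= norm1 z.

(* Because every [t_n P] is an integer, [phi (j - 2kP) t_n = phi j t_n]; hence the shifted
   sequence produces the same measurements [Uz] as [xhat], the sum defining each [(Uz)_n] being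
   merely reindexed. Reindexing an absolutely summable family over [Z] preserves its sum and
   its l^1 norm, so the shifted sequence is feasible with the optimal norm. *)

From Stdlib Require Import Reals ZArith Lia Lra FunctionalExtensionality.
From Coquelicot Require Import Coquelicot.
Open Scope R_scope.

Definition summableZ (a : Z -> R) : Prop := ex_series (posZ a) /\ ex_series (negZ a).
Definition seriesZ (a : Z -> R) : R := Series (posZ a) + Series (negZ a).
Definition shiftZ {A} (s : Z) (a : Z -> A) : Z -> A := fun j => a (j - s)%Z.
Definition reflectZ {A} (a : Z -> A) : Z -> A := fun j => a (- j - 1)%Z.

Definition shift_invariant (s : Z) : Prop :=
  forall a, summableZ a -> summableZ (shiftZ s a) /\ seriesZ (shiftZ s a) = seriesZ a.

Lemma posZ_reflectZ {A} (a : Z -> A) : posZ (reflectZ a) = negZ a.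
Proof.
  apply functional_extensionality; intro n; unfold posZ, negZ, reflectZ; f_equal; lia.
Qed.

Lemma negZ_reflectZ {A} (a : Z -> A) : negZ (reflectZ a) = posZ a.
Proof.
  apply functional_extensionality; intro n; unfold posZ, negZ, reflectZ; f_equal; lia.
Qed.

Lemma summableZ_reflectZ (a : Z -> R) : summableZ a -> summableZ (reflectZ a).
Proof. unfold summableZ; rewrite posZ_reflectZ, negZ_reflectZ; tauto. Qed.

Lemma seriesZ_reflectZ (a : Z -> R) : seriesZ (reflectZ a) = seriesZ a.
Proof. unfold seriesZ; rewrite posZ_reflectZ, negZ_reflectZ; ring. Qed.

Lemma shift_invariant_1 : shift_invariant 1.
Proof.
  intros a [Hpos Hneg].
  assert (Epos : forall n, posZ (shiftZ 1 a) (S n) = posZ a n).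
  { intro n; unfold posZ, shiftZ; f_equal; lia. }
  assert (Epos0 : posZ (shiftZ 1 a) 0%nat = negZ a 0%nat).
  { unfold posZ, negZ, shiftZ; f_equal; lia. }
  assert (Eneg : forall n, negZ (shiftZ 1 a) n = negZ a (S n)).
  { intro n; unfold negZ, shiftZ; f_equal; lia. }
  assert (Hpos' : ex_series (posZ (shiftZ 1 a))).
  { apply ex_series_incr_1, (ex_series_ext (posZ a)); auto. }
  assert (Hneg' : ex_series (negZ (shiftZ 1 a))).
  { apply (ex_series_ext (fun n => negZ a (S n))); auto.
    now apply (ex_series_incr_1 (negZ a)). }
  split; [split; assumption |].
  unfold seriesZ; rewrite (Series_incr_1 _ Hpos'), (Series_incr_1 _ Hneg), Epos0.
  rewrite (Series_ext _ _ Epos), (Series_ext _ _ Eneg); ring.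
Qed.

(* Conjugating by the reflection [j |-> -j-1] turns a shift by [1] into a shift by [-1]. *)
Lemma shift_invariant_m1 : shift_invariant (-1).
Proof.
  intros a Ha.
  replace (shiftZ (-1) a) with (reflectZ (shiftZ 1 (reflectZ a))).
  2: { apply functional_extensionality; intro j; unfold shiftZ, reflectZ; f_equal; lia. }
  destruct (shift_invariant_1 _ (summableZ_reflectZ _ Ha)) as [Hs Es].
  split; [now apply summableZ_reflectZ |].
  now rewrite seriesZ_reflectZ, Es, seriesZ_reflectZ.
Qed.

Lemma shift_invariant_add (s d : Z) :
  shift_invariant s -> shift_invariant d -> shift_invariant (s + d).
Proof.
  intros Hs Hd a Ha.
  replace (shiftZ (s + d) a) with (shiftZ d (shiftZ s a)).
  2: { apply functional_extensionality; intro j; unfold shiftZ; f_equal; lia. }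
  destruct (Hs a Ha) as [Ha' Ea]; destruct (Hd _ Ha') as [Ha'' Ea'].
  split; [assumption | congruence].
Qed.

Lemma shift_invariantZ (s : Z) : shift_invariant s.
Proof.
  induction s as [|s IH|s IH] using Z.peano_ind.
  - intros a Ha.
    replace (shiftZ 0 a) with a.
    2: { apply functional_extensionality; intro j; unfold shiftZ; f_equal; lia. }
    auto.
  - rewrite <- Z.add_1_r; exact (shift_invariant_add _ _ IH shift_invariant_1).
  - rewrite <- Z.sub_1_r; exact (shift_invariant_add _ _ IH shift_invariant_m1).
Qed.

Lemma summableZ_le (a b : Z -> R) :
  (forall j, Rabs (a j) <= b j) -> summableZ b -> summableZ a.
Proof.
  intros Hab [Hpos Hneg]; split.
  - apply (@ex_series_le R_AbsRing R_CompleteNormedModule _ (posZ b)); auto.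
    intro n; apply Hab.
  - apply (@ex_series_le R_AbsRing R_CompleteNormedModule _ (negZ b)); auto.
    intro n; apply Hab.
Qed.

Lemma im_le_Cmod (c : C) : Rabs (Im c) <= Cmod c.
Proof.
  destruct c as [a b]; unfold Cmod; simpl; rewrite <- sqrt_Rsqr_abs.
  apply sqrt_le_1_alt; unfold Rsqr; nra.
Qed.

Lemma sumZ_shiftZ (s : Z) (a : Z -> C) :
  summableZ (fun j => Cmod (a j)) -> sumZ (shiftZ s a) = sumZ a.
Proof.
  intro Ha.
  assert (HRe : summableZ (fun j => Re (a j))).
  { apply (summableZ_le _ _ (fun j => re_le_Cmod (a j)) Ha). }
  assert (HIm : summableZ (fun j => Im (a j))).
  { apply (summableZ_le _ _ (fun j => im_le_Cmod (a j)) Ha). }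
  destruct (shift_invariantZ s _ HRe) as [_ ERe].
  destruct (shift_invariantZ s _ HIm) as [_ EIm].
  unfold sumZ; f_equal; [exact ERe | exact EIm].
Qed.

Lemma ell1_shiftZ (s : Z) (z : Z -> C) : ell1 z -> ell1 (shiftZ s z).
Proof. intro Hz; apply (shift_invariantZ s _ Hz). Qed.

Lemma norm1_shiftZ (s : Z) (z : Z -> C) : ell1 z -> norm1 (shiftZ s z) = norm1 z.
Proof. intro Hz; apply (shift_invariantZ s _ Hz). Qed.

Lemma cos_periodZ (x : R) (k : Z) : cos (x + 2 * IZR k * PI) = cos x.
Proof.
  destruct (Z_le_gt_dec 0 k) as [Hk | Hk].
  - rewrite <- (Z2Nat.id k Hk), <- INR_IZR_INZ; apply cos_period.
  - rewrite <- (cos_period _ (Z.to_nat (- k))), INR_IZR_INZ, Z2Nat.id by lia.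
    f_equal; rewrite opp_IZR; ring.
Qed.

Lemma sin_periodZ (x : R) (k : Z) : sin (x + 2 * IZR k * PI) = sin x.
Proof.
  destruct (Z_le_gt_dec 0 k) as [Hk | Hk].
  - rewrite <- (Z2Nat.id k Hk), <- INR_IZR_INZ; apply sin_period.
  - rewrite <- (sin_period _ (Z.to_nat (- k))), INR_IZR_INZ, Z2Nat.id by lia.
    f_equal; rewrite opp_IZR; ring.
Qed.

Lemma phi_periodic (j s m : Z) (t : R) :
  IZR s * t = 2 * IZR m -> phi (j - s) t = phi j t.
Proof.
  intro Hst; unfold phi.
  replace (IZR j * PI * t) with (IZR (j - s) * PI * t + 2 * IZR m * PI)
    by (rewrite minus_IZR, <- Hst; ring).
  now rewrite cos_periodZ, sin_periodZ.
Qed.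

Lemma Cmod_phi (j : Z) (t : R) : Cmod (phi j t) = 1.
Proof.
  unfold Cmod, phi; rewrite <- sqrt_1; f_equal; simpl.
  pose proof (sin2_cos2 (IZR j * PI * t)); unfold Rsqr in *; nra.
Qed.

Lemma Uop_shiftZ (t : nat -> R) (z : Z -> C) (n : nat) (s m : Z) :
  ell1 z -> IZR s * t n = 2 * IZR m -> Uop t (shiftZ s z) n = Uop t z n.
Proof.
  intros Hz Hst; unfold Uop.
  replace (fun j => Cmult (shiftZ s z j) (phi j (t n)))
    with (shiftZ s (fun j => Cmult (z j) (phi j (t n)))).
  2: { apply functional_extensionality; intro j; unfold shiftZ.
       now rewrite (phi_periodic j s m). }
  apply sumZ_shiftZ.
  replace (fun j => Cmod (Cmult (z j) (phi j (t n)))) with (fun j => Cmod (z j));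
    [exact Hz |].
  apply functional_extensionality; intro j; rewrite Cmod_mult, Cmod_phi; ring.
Qed.

Theorem proposition4p1 (N P : nat) (t : nat -> R) (y : nat -> C) (xhat : Z -> C) :
  (forall n, (n < N)%nat -> -1 <= t n <= 1) ->
  (forall n, (n < N)%nat -> exists m : Z, t n * INR P = IZR m) ->
  is_solution N t y xhat ->
  forall k : Z,
    is_solution N t y (fun i : Z => xhat (i - 2 * k * Z.of_nat P)%Z).
Proof.
  intros _ Hgrid [[Hx Hfeas] Hmin] k.
  set (s := (2 * k * Z.of_nat P)%Z).
  change (fun i => xhat (i - s)%Z) with (shiftZ s xhat).
  split.
  - split; [now apply ell1_shiftZ |].
    intros n Hn; rewrite <- (Hfeas n Hn).
    destruct (Hgrid n Hn) as [m Hm].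
    apply (Uop_shiftZ _ _ _ _ (k * m)); [assumption |].
    unfold s; rewrite !mult_IZR, <- Hm, <- INR_IZR_INZ; ring.
  - intros z Hz; rewrite norm1_shiftZ by assumption; now apply Hmin.
Qed.
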